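(* Let $N\ge0$ be an integer and $s,t,S$ be numbers with $s-S\in\mathbb{Z}$. Define, for $T\in t+\mathbb{Z}$, $$R^{(s,t)}_{(S,T)}(N)=\frac{(-1)^{t-T+N}N!}{(s-S+N)!\,(t-T+N)!\,(S-s+T-t-N)!},$$ with the convention that it is $0$ if any factorial argument is negative. Then $$\sum_{T\in t+\mathbb{Z}}R^{(s,t)}_{(S,T)}(N)=\delta_{s,S}.$$ *)

From mathcomp Require Import all_boot all_order all_algebra.
Set Implicit Arguments. Unset Strict Implicit. Unset Printing Implicit Defensive.
Import Order.TTheory GRing.Theory Num.Theory.
Local Open Scope ring_scope.

(* Factorial of an integer argument, as a field element; only used for
   nonnegative arguments (the convention "0 if any argument is negative"
   is handled in [Rcoef]). *)
Definition zfact (K : fieldType) (x : int) : K := ((`|x|%N)`!)%:R.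

(* R^{(s,t)}_{(S,T)}(N), expressed through the integer differences
   a = s - S and b = t - T:
     (-1)^(b+N) N! / ((a+N)! (b+N)! (-a-b-N)!),
   and 0 if one of a+N, b+N, -a-b-N is negative. *)
Definition Rcoef (K : fieldType) (a b : int) (N : nat) : K :=
  let x := a + N%:Z in
  let y := b + N%:Z in
  let z := - a - b - N%:Z in
  if [&& 0 <= x, 0 <= y & 0 <= z] then
    (-1) ^+ (`|y|%N) * (N`!)%:R / (zfact K x * zfact K y * zfact K z)
  else 0.

Definition is_fsum (K : fieldType) (f : int -> K) (l : K) : Prop :=
  exists M : nat,
    (forall m : int, (M%:Z < `|m|)%R -> f m = 0) /\
    \sum_(0 <= i < (M + M).+1) f (i%:Z - M%:Z) = l.

From mathcomp Require Import all_boot all_order all_algebra.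
From mathcomp Require Import zify ring.
Set Implicit Arguments. Unset Strict Implicit. Unset Printing Implicit Defensive.
Import Order.TTheory GRing.Theory Num.Theory.
Local Open Scope ring_scope.

(* Writing k = -n, the coefficient vanishes unless 0 <= n <= N, and the
   nonzero terms T = t + N - n + i (0 <= i <= n) equal
   N! / ((N - n)! n!) * (-1)^(n - i) C(n, i).  Their sum is therefore a
   multiple of (-1 + 1)^n, which is 0 unless n = 0, where it is 1. *)

Lemma is_fsum_window (K : fieldType) (f : int -> K) (lo : int) (L : nat) :
  (forall m, f m != 0 -> lo <= m <= lo + L%:Z) ->
  is_fsum f (\sum_(i < L.+1) f (lo + i%:Z)).
Proof.
move=> supp; set M := (`|lo| + L)%N; exists M; split.
  move=> m hm; apply/eqP; apply: contraTT hm => /supp /andP [h1 h2]; lia.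
set p := `|(M%:Z + lo)%R|%N.
rewrite (big_cat_nat _ (n := p)) /=; [|lia|lia].
rewrite big_nat_cond big1 ?add0r; last first.
  move=> i /andP [/andP [_ hi] _]; apply/eqP; apply: contraTT hi => /supp; lia.
rewrite (big_cat_nat _ (n := (p + L.+1)%N)) /=; [|lia|lia].
rewrite [X in _ + X]big_nat_cond [X in _ + X]big1 ?addr0; last first.
  move=> i /andP [/andP [hi _] _]; apply/eqP; apply: contraTT hi => /supp; lia.
rewrite -{1}(add0n p) big_addn addnC addnK big_mkord.
by apply: eq_bigr => i _; congr f; lia.
Qed.

Lemma sum_alternating_binomial (R : comPzRingType) (n : nat) :
  \sum_(i < n.+1) (-1) ^+ (n - i) *+ 'C(n, i) = (n == 0)%:R :> R.
Proof.
have := exprDn (-1 : R) 1 n; rewrite addNr expr0n => ->.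
by apply: eq_bigr => i _; rewrite expr1n mulr1.
Qed.

Lemma Rcoef_neq0 (K : fieldType) (a b : int) (N : nat) :
  Rcoef K a b N != 0 -> [&& 0 <= a + N%:Z, 0 <= b + N%:Z & 0 <= - a - b - N%:Z].
Proof. by rewrite /Rcoef; case: ifP => // _; rewrite eqxx. Qed.

Lemma natr_fact_neq0 (R : numDomainType) (m : nat) : m`!%:R != 0 :> R.
Proof. by rewrite pnatr_eq0 -lt0n fact_gt0. Qed.

Lemma Rcoef_binomial (K : numFieldType) (N n i : nat) :
  (n <= N)%N -> (i <= n)%N ->
  Rcoef K (- n%:Z) (- ((N - n)%N%:Z + i%:Z)) N
  = N`!%:R / ((N - n)`!%:R * n`!%:R) * ((-1) ^+ (n - i) *+ 'C(n, i)).
Proof.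
move=> nN iN; rewrite /Rcoef /zfact.
have -> : [&& 0 <= - n%:Z + N%:Z, 0 <= - ((N - n)%N%:Z + i%:Z) + N%:Z
            & 0 <= - - n%:Z - - ((N - n)%N%:Z + i%:Z) - N%:Z] by lia.
have -> : `|(- n%:Z + N%:Z)%R|%N = (N - n)%N by lia.
have -> : `|(- ((N - n)%N%:Z + i%:Z) + N%:Z)%R|%N = (n - i)%N by lia.
have -> : `|(- - n%:Z - - ((N - n)%N%:Z + i%:Z) - N%:Z)%R|%N = i by lia.
rewrite -mulr_natr -(bin_fact iN) !natrM.
have bin_neq0 : 'C(n, i)%:R != 0 :> K by rewrite pnatr_eq0 -lt0n bin_gt0.
by field; rewrite !natr_fact_neq0 bin_neq0.
Qed.

Theorem mainTheorem11 (K : numFieldType) (N : nat) (s t S : K) (k : int)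
    (hk : s - S = k%:~R) :
  is_fsum (fun m : int => Rcoef K k (- m) N)
          ((s == S)%:R).
Proof.
have -> : (s == S) = (k == 0) by rewrite -subr_eq0 hk intr_eq0.
have [/andP [Nk k0] | kout] := boolP ((- N%:Z <= k) && (k <= 0)); last first.
  have vanish m : Rcoef K k (- m) N = 0.
    by apply/eqP; apply: contraTT kout => /Rcoef_neq0; lia.
  have supp m : Rcoef K k (- m) N != 0 -> 0 <= m <= 0 + 0%:Z.
    by rewrite vanish eqxx.
  have -> : (k == 0) = false by lia.
  by have := is_fsum_window supp; rewrite big_ord1 vanish.
have [n kE] : exists n : nat, k = - n%:Z by exists `|k|%N; lia.
have nN : (n <= N)%N by lia.
rewrite kE oppr_eq0 eqz_nat.
have supp m : Rcoef K (- n%:Z) (- m) N != 0 -> (N - n)%N%:Z <= m <= (N - n)%N%:Z + n%:Z.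
  by move/Rcoef_neq0; lia.
have window_sum :
    \sum_(i < n.+1) Rcoef K (- n%:Z) (- ((N - n)%N%:Z + i%:Z)) N = (n == 0)%:R.
  rewrite (eq_bigr _ (fun (i : 'I_n.+1) _ => Rcoef_binomial K nN (ltn_ord i))).
  rewrite -mulr_sumr sum_alternating_binomial.
  case: eqP => [->|_]; last by rewrite mulr0.
  by rewrite subn0 fact0 !mulr1 divff // natr_fact_neq0.
by have := is_fsum_window supp; rewrite window_sum.
Qed.
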